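(* Let $\beta\in(0,1/2^{|S|})$ and $\varepsilon\in\left(0,\frac{\beta(1-\beta)}{L\,|S|^{4}}\right)$. For every irreducible transition matrix $q$ on $S$ and every transition matrix $\widehat q$ on $S$ that is $(\varepsilon,\beta)$-close to $q$: (1) $\widehat q$ is irreducible; (2) its stationary distribution $\widehat\mu$ satisfies $\left|1-\frac{\widehat\mu_s}{\mu_s}\right|\le 18\beta L$ for every $s\in S$.
   Context: $S$ is a finite set with $|S|\ge 2$. A transition matrix on $S$ is $q=(q(t\mid s))_{s,t\in S}$ with nonnegative entries and $\sum_{t}q(t\mid s)=1$ for each $s$; for $D\subseteq S$ write $q(D\mid s)=\sum_{t\in D}q(t\mid s)$, and for $C\subseteq S$ write $\overline C=S\setminus C$. For irreducible $q$, $\mu=(\mu_s)_{s\in S}$ denotes its stationary distribution. Define $\zeta_q=\min_{\emptyset\neq C\subsetneq S}\sum_{s\in C}\mu_s\,q(\overline C\mid s)$. Given $\varepsilon,\beta>0$, a transition matrix $\widehat q$ is $(\varepsilon,\beta)$-close to $q$ if for all $s,t\in S$, $\left|1-\frac{\widehat q(t\mid s)}{q(t\mid s)}\right|\le\beta$ whenever (a) $\mu_s q(t\mid s)\ge\varepsilon\zeta_q$ or (b) $\mu_s\widehat q(t\mid s)\ge\varepsilon\zeta_q$ (in case (b) this requires in particular $q(t\mid s)>0$). Finally $L=\sum_{n=1}^{|S|-1}\binom{|S|}{n}n^{|S|}$. *)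

From mathcomp Require Import all_boot all_order all_algebra.
Set Implicit Arguments. Unset Strict Implicit. Unset Printing Implicit Defensive.
Import Order.TTheory GRing.Theory Num.Theory.
Local Open Scope ring_scope.

Section Defs.
Variables (R : realFieldType) (S : finType).

(* A transition matrix: q s t stands for q(t | s). *)
Definition transition (q : S -> S -> R) : Prop :=
  (forall s t, 0 <= q s t) /\ (forall s, \sum_(t : S) q s t = 1).

Definition trans_set (q : S -> S -> R) (D : {set S}) (s : S) : R :=
  \sum_(t in D) q s t.

Definition irreducible (q : S -> S -> R) : Prop :=
  forall s t : S, connect (fun x y => 0 < q x y) s t.

Definition stationary (q : S -> S -> R) (mu : S -> R) : Prop :=
  (forall s, 0 <= mu s) /\ (\sum_(s : S) mu s = 1) /\
  (forall t, \sum_(s : S) mu s * q s t = mu t).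

Definition flow (q : S -> S -> R) (mu : S -> R) (C : {set S}) : R :=
  \sum_(s in C) mu s * trans_set q (~: C) s.

(* zeta_q : minimum over nonempty proper subsets C. The seed 1 of the fold
   is harmless, since every flow value is <= 1 for a probability vector mu
   and a stochastic q. *)
Definition zeta (q : S -> S -> R) (mu : S -> R) : R :=
  \big[Num.min/1]_(C : {set S} | (C != set0) && (C != setT)) flow q mu C.

Definition close (eps beta : R) (q : S -> S -> R) (mu : S -> R)
    (qh : S -> S -> R) : Prop :=
  forall s t : S,
    (eps * zeta q mu <= mu s * q s t ->
       `|1 - qh s t / q s t| <= beta) /\
    (eps * zeta q mu <= mu s * qh s t ->
       0 < q s t /\ `|1 - qh s t / q s t| <= beta).

End Defs.

Definition Lconst (S : finType) : nat :=
  \sum_(1 <= n < #|S|) 'C(#|S|, n) * n ^ #|S|.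

(* Put r := mu_hat / mu.  Stationarity balances the flux across every cut C, so comparing the
   mu_hat- and mu-weighted fluxes of q_hat across C gives min_C r <= (1 + 4 beta) max_(~C) r,
   provided closeness controls the mu-weighted flux of q_hat out of and into C by the q-flux
   up to the factors (1 - beta)(1 - delta) and 1 + beta + delta.  It does, with
   delta = |S|^2 eps: the entries with mu_s q(t|s) < eps zeta_q err by at most eps zeta_q
   each, there are at most |S|^2 of them, and each cut of q carries flux at least zeta_q.
   Growing nested cuts from a maximiser of r gives max r <= (1 + 4 beta)^(|S|-1) min r, and
   since sum mu r = 1, |1 - r| is at most (1 + 4 beta)^(|S|-1) - 1 <= 4 beta (|S|-1) 2^(|S|-1),
   which is below 18 beta L.  The same lower bound on the flux out of every cut makes q_hat
   irreducible. *)

From mathcomp Require Import all_boot all_order all_algebra.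
From mathcomp Require Import ring lra zify.
Import Order.TTheory GRing.Theory Num.Theory.
Set Implicit Arguments. Unset Strict Implicit. Unset Printing Implicit Defensive.
Local Open Scope ring_scope.

Section Flux.
Variables (R : realFieldType) (S : finType).
Implicit Types (q : S -> S -> R) (nu : S -> R) (A B C : {set S}).

Definition flux q nu A B : R := \sum_(x in A) \sum_(y in B) nu x * q x y.

Lemma flowE q nu C : flow q nu C = flux q nu C (~: C).
Proof. by apply: eq_bigr => x _; rewrite /trans_set mulr_sumr. Qed.

Lemma mulr_flux c q nu A B :
  c * flux q nu A B = \sum_(x in A) \sum_(y in B) c * (nu x * q x y).
Proof. by rewrite mulr_sumr; apply: eq_bigr => x _; rewrite mulr_sumr. Qed.

Lemma fluxZ a q nu A B : flux q (fun x => a * nu x) A B = a * flux q nu A B.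
Proof.
by rewrite mulr_flux; apply: eq_bigr => x _; apply: eq_bigr => y _; rewrite mulrA.
Qed.

Lemma ler_flux_weight q nu nu' A B : (forall x y, 0 <= q x y) ->
  {in A, forall x, nu x <= nu' x} -> flux q nu A B <= flux q nu' A B.
Proof.
move=> q_ge0 le_nu; apply: ler_sum => x xA; apply: ler_sum => y _.
by rewrite ler_wpM2r // le_nu.
Qed.

Lemma flux_ge0 q nu A B : (forall x, 0 <= nu x) -> (forall x y, 0 <= q x y) ->
  0 <= flux q nu A B.
Proof. by move=> nu_ge0 q_ge0; do 2!apply: sumr_ge0 => ? _; exact: mulr_ge0. Qed.

Lemma flux_gt0P q nu A B : (forall x, 0 <= nu x) -> (forall x y, 0 <= q x y) ->
  reflect (exists x y, [/\ x \in A, y \in B & 0 < nu x * q x y])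
          (0 < flux q nu A B).
Proof.
move=> nu_ge0 q_ge0; have term_ge0 x y : 0 <= nu x * q x y by exact: mulr_ge0.
rewrite lt0r flux_ge0 // andbT psumr_neq0 => [|x _]; last first.
  by apply: sumr_ge0 => y _.
apply: (iffP hasP) => [[x _ /andP[xA]]|[x [y [xA yB pos_xy]]]].
  rewrite lt0r (sumr_ge0 _ (fun y _ => term_ge0 x y)) andbT psumr_neq0 //.
  by case/hasP=> y _ /andP[yB pos_xy]; exists x, y.
exists x; first exact: mem_index_enum.
rewrite xA lt0r (sumr_ge0 _ (fun y _ => term_ge0 x y)) andbT psumr_neq0 //.
by apply/hasP; exists y; rewrite ?mem_index_enum ?yB.
Qed.

Lemma sumr_split_setC C (F : S -> R) :
  \sum_y F y = \sum_(y in C) F y + \sum_(y in ~: C) F y.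
Proof.
by rewrite (bigID (mem C)) /=; congr (_ + _); apply: eq_bigl => y; rewrite in_setC.
Qed.

Lemma flux_balance q nu C :
    (forall s, \sum_t q s t = 1) -> (forall t, \sum_s nu s * q s t = nu t) ->
  flux q nu C (~: C) = flux q nu (~: C) C.
Proof.
move=> q_row nu_stat.
have out_mass : \sum_(x in C) nu x = flux q nu C C + flux q nu C (~: C).
  rewrite /flux -big_split /=; apply: eq_bigr => x _.
  by rewrite -sumr_split_setC -mulr_sumr q_row mulr1.
have in_mass : \sum_(y in C) nu y = flux q nu C C + flux q nu (~: C) C.
  rewrite /flux exchange_big [X in _ + X]exchange_big -big_split /=.
  by apply: eq_bigr => y _; rewrite -sumr_split_setC nu_stat.
by apply: (@addrI _ (flux q nu C C)); rewrite -out_mass -in_mass.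
Qed.
End Flux.

Lemma connect_exit_edge (T : finType) (e : rel T) (C : {set T}) s t :
  connect e s t -> s \in C -> t \notin C ->
  exists x y, [/\ x \in C, y \notin C & e x y].
Proof.
move/connectP=> [p e_p ->] {t}.
elim: p s e_p => [|y p IHp] s /= => [_ -> //|/andP[e_sy e_p] sC].
have [yC|yNC] := boolP (y \in C); first exact: IHp.
by exists s, y.
Qed.

Section Irreducible.
Variables (R : realFieldType) (S : finType).
Implicit Types (q : S -> S -> R) (mu nu : S -> R) (C : {set S}).

Lemma flux_out_gt0 q nu C : irreducible q -> (forall x y, 0 <= q x y) ->
    (forall x, 0 <= nu x) -> {in C, forall x, 0 < nu x} ->
  C != set0 -> C != setT -> 0 < flux q nu C (~: C).
Proof.
move=> irr q_ge0 nu_ge0 nu_gt0 /set0Pn[s sC].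
rewrite -subTset => /subsetPn[t _ tNC].
have [x [y [xC yNC qxy]]] := connect_exit_edge (irr s t) sC tNC.
apply/flux_gt0P => //; exists x, y; split; rewrite ?inE //.
by rewrite mulr_gt0 ?nu_gt0.
Qed.

Lemma irreducible_of_flux q nu : (forall x y, 0 <= q x y) -> (forall x, 0 <= nu x) ->
  (forall C, C != set0 -> C != setT -> 0 < flux q nu C (~: C)) -> irreducible q.
Proof.
move=> q_ge0 nu_ge0 out_gt0 s t; apply/idPn => st.
set C := [set y | connect (fun x y => 0 < q x y) s y].
have C0 : C != set0 by apply/set0Pn; exists s; rewrite inE connect0.
have CT : C != setT.
  by apply: contraNneq st => CT; have := in_setT t; rewrite -CT inE.
have /flux_gt0P[// | // | x [y [xC yNC nu_q_gt0]]] := out_gt0 C C0 CT.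
have qxy : 0 < q x y.
  by rewrite lt0r q_ge0 andbT; apply: contraTneq nu_q_gt0 => ->; rewrite mulr0 ltxx.
move: yNC; rewrite !inE in xC * => /negP; apply.
exact: connect_trans xC (connect1 qxy).
Qed.

Lemma stationary_gt0 q mu : transition q -> irreducible q -> stationary q mu ->
  forall s, 0 < mu s.
Proof.
move=> [q_ge0 q_row] irr [mu_ge0 [mu_sum mu_stat]] s.
set P := [set x | 0 < mu x].
suff /eqP PT : P == setT by have := in_setT s; rewrite -PT inE.
apply/negPn/negP => PNT.
have P0 : P != set0.
  have /psumr_neq0P[// | x /andP[_ mux]] : \sum_x mu x <> 0.
    by rewrite mu_sum; apply/eqP; exact: oner_neq0.
  by apply/set0Pn; exists x; rewrite inE.
have P_gt0 : {in P, forall x, 0 < mu x} by move=> x; rewrite inE.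
have := flux_out_gt0 irr q_ge0 mu_ge0 P_gt0 P0 PNT.
rewrite flux_balance // /flux big1 ?ltxx // => x.
rewrite !inE -leNgt => mux; have -> : mu x = 0 by apply/le_anti; rewrite mux mu_ge0.
by rewrite big1 // => y _; rewrite mul0r.
Qed.

Lemma zeta_le_flux q mu C : C != set0 -> C != setT ->
  zeta q mu <= flux q mu C (~: C).
Proof. by move=> C0 CT; rewrite -flowE; apply: bigmin_le_cond; rewrite C0 CT. Qed.

Lemma zeta_gt0 q mu : transition q -> irreducible q -> stationary q mu ->
  0 < zeta q mu.
Proof.
move=> q_tr irr mu_st; rewrite /zeta; apply: lt_bigmin => // C /andP[C0 CT].
rewrite flowE; apply: flux_out_gt0 C0 CT => //; [exact: q_tr.1 | exact: mu_st.1 |].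
by move=> x _; exact: stationary_gt0 q_tr irr mu_st x.
Qed.

End Irreducible.

Lemma ratio_close_bounds (R : realFieldType) (beta v w : R) :
  0 < v -> `|1 - w / v| <= beta -> (1 - beta) * v <= w <= (1 + beta) * v.
Proof.
move=> v_gt0; rewrite ler_norml => /andP[lo hi].
rewrite -[w](divfK (lt0r_neq0 v_gt0)) !ler_pM2r //; apply/andP; split; lra.
Qed.

Lemma ler_sum2_slack (R : realFieldType) (S : finType) (A B : {set S})
    (f g : S -> S -> R) (k : R) :
  0 <= k -> (forall x y, f x y <= g x y + k) ->
  \sum_(x in A) \sum_(y in B) f x y <=
    \sum_(x in A) \sum_(y in B) g x y + k * #|S|%:R ^+ 2.
Proof.
move=> k_ge0 fg.
apply: le_trans (_ : \sum_(x in A) \sum_(y in B) (g x y + k) <= _).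
  by apply: ler_sum => x _; apply: ler_sum => y _.
under eq_bigr do rewrite big_split /= sumr_const.
rewrite big_split /= sumr_const lerD2l -mulrnA -[k *+ _]mulr_natr ler_wpM2l //.
by rewrite -natrX ler_nat expnS expn1 leq_mul ?max_card.
Qed.

Section Perturbation.
Variables (R : realFieldType) (S : finType) (beta eps : R).
Variables (q qh : S -> S -> R) (mu : S -> R).
Hypotheses (q_tr : transition q) (q_irr : irreducible q) (mu_st : stationary q mu).
Hypotheses (qh_tr : transition qh) (qh_close : close eps beta q mu qh).
Hypotheses (beta_ge0 : 0 <= beta) (beta_le1 : beta <= 1) (eps_ge0 : 0 <= eps).

Local Notation zeta := (zeta q mu).
Local Notation del := (#|S|%:R ^+ 2 * eps).

Let q_ge0 := q_tr.1.
Let qh_ge0 := qh_tr.1.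
Let mu_ge0 := mu_st.1.
Let zeta_ge0 : 0 <= zeta := ltW (zeta_gt0 q_tr q_irr mu_st).

Let beta1_ge0 : 0 <= 1 - beta. Proof. by rewrite subr_ge0. Qed.

Lemma close_lower x y :
  (1 - beta) * (mu x * q x y) <= mu x * qh x y + (1 - beta) * (eps * zeta).
Proof.
have mqh_ge0 := mulr_ge0 (mu_ge0 x) (qh_ge0 x y).
have slack_ge0 : 0 <= (1 - beta) * (eps * zeta) by rewrite !mulr_ge0.
have [small|big] := ltrP (mu x * q x y) (eps * zeta).
  by have := ler_wpM2l beta1_ge0 (ltW small); lra.
have [q0|q_neq0] := eqVneq (q x y) 0; first by rewrite q0 !mulr0; lra.
have q_gt0 : 0 < q x y by rewrite lt0r q_neq0 q_ge0.
have /andP[lo _] := ratio_close_bounds q_gt0 ((qh_close x y).1 big).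
by have := ler_wpM2l (mu_ge0 x) lo; lra.
Qed.

Lemma close_upper x y :
  mu x * qh x y <= (1 + beta) * (mu x * q x y) + eps * zeta.
Proof.
have mq_ge0 := mulr_ge0 (mu_ge0 x) (q_ge0 x y).
have [small|big] := ltrP (mu x * qh x y) (eps * zeta).
  have : 0 <= (1 + beta) * (mu x * q x y) by rewrite mulr_ge0 // addr_ge0.
  lra.
have [q_gt0 close_xy] := (qh_close x y).2 big.
have /andP[_ hi] := ratio_close_bounds q_gt0 close_xy.
by have := ler_wpM2l (mu_ge0 x) hi; have := mulr_ge0 eps_ge0 zeta_ge0; lra.
Qed.

Let mu_gt0 := stationary_gt0 q_tr q_irr mu_st.
Let del_ge0 : 0 <= del. Proof. by rewrite mulr_ge0 ?exprn_ge0. Qed.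

Lemma flux_perturbed_out C : C != set0 -> C != setT ->
  (1 - beta) * (1 - del) * flux q mu C (~: C) <= flux qh mu C (~: C).
Proof.
move=> C0 CT.
have := ler_sum2_slack C (~: C) (mulr_ge0 beta1_ge0 (mulr_ge0 eps_ge0 zeta_ge0))
  close_lower.
rewrite -mulr_flux -/(flux qh mu C (~: C)).
have := ler_wpM2l (mulr_ge0 beta1_ge0 del_ge0) (zeta_le_flux q mu C0 CT).
lra.
Qed.

Lemma flux_perturbed_in C : C != set0 -> C != setT ->
  flux qh mu (~: C) C <= (1 + beta + del) * flux q mu C (~: C).
Proof.
move=> C0 CT.
have := ler_sum2_slack (~: C) C (mulr_ge0 eps_ge0 zeta_ge0) close_upper.
rewrite -mulr_flux -/(flux qh mu (~: C) C) -(flux_balance C q_tr.2 mu_st.2.2).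
have := ler_wpM2l del_ge0 (zeta_le_flux q mu C0 CT).
lra.
Qed.

Lemma perturbed_irreducible : beta < 1 -> del < 1 -> irreducible qh.
Proof.
move=> beta_lt1 del_lt1; apply: (irreducible_of_flux qh_ge0 mu_ge0) => C C0 CT.
apply: lt_le_trans (flux_perturbed_out C0 CT).
by rewrite !mulr_gt0 ?subr_gt0 // flux_out_gt0.
Qed.

Lemma perturbed_ratio_cut muh rho C a b : stationary qh muh ->
    0 < (1 - beta) * (1 - del) ->
    1 + beta + del <= rho * ((1 - beta) * (1 - del)) ->
    C != set0 -> C != setT -> 0 <= a -> 0 <= b ->
    {in C, forall x, a <= muh x / mu x} -> {in ~: C, forall y, muh y / mu y <= b} ->
  a <= rho * b.
Proof.
move=> [_ [_ muh_stat]] c_gt0 d_le C0 CT a_ge0 b_ge0 a_le b_ge.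
have F_gt0 : 0 < flux q mu C (~: C) by rewrite flux_out_gt0.
have a_muh x : x \in C -> a * mu x <= muh x by move/a_le; rewrite ler_pdivlMr.
have b_muh y : y \in ~: C -> muh y <= b * mu y by move/b_ge; rewrite ler_pdivrMr.
have chain : a * ((1 - beta) * (1 - del) * flux q mu C (~: C)) <=
             b * ((1 + beta + del) * flux q mu C (~: C)).
  apply: le_trans (_ : _ <= a * flux qh mu C (~: C)) _.
    by rewrite ler_wpM2l // flux_perturbed_out.
  rewrite -[a * _]fluxZ; apply: le_trans (ler_flux_weight _ qh_ge0 a_muh) _.
  rewrite (flux_balance C qh_tr.2 muh_stat).
  apply: le_trans (ler_flux_weight _ qh_ge0 b_muh) _.
  by rewrite fluxZ ler_wpM2l // flux_perturbed_in.
rewrite -(ler_pM2r (mulr_gt0 c_gt0 F_gt0)).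
have := ler_wpM2l b_ge0 (ler_wpM2r (ltW F_gt0) d_le).
lra.
Qed.

End Perturbation.

Section RatioSpread.
Variables (R : realFieldType) (S : finType) (r : S -> R) (rho : R).
Hypotheses (rho_ge1 : 1 <= rho) (r_ge0 : forall x, 0 <= r x).
Hypothesis ratio_cut : forall (C : {set S}) a b,
  C != set0 -> C != setT -> 0 <= a -> 0 <= b ->
  {in C, forall x, a <= r x} -> {in ~: C, forall y, r y <= b} -> a <= rho * b.

Lemma ratio_spread x y : r x <= rho ^+ #|S|.-1 * r y.
Proof.
have [x0 _ r_max] := arg_maxP r (isT : predT x).
have rho_gt0 : 0 < rho := lt_le_trans ltr01 rho_ge1.
have grow k : (k < #|S|)%N ->
    exists C : {set S}, #|C| = k.+1 /\ {in C, forall z, r x0 <= rho ^+ k * r z}.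
  elim: k => [_|k IHk k_lt].
    by exists [set x0]; split=> [|z /set1P ->]; rewrite ?cards1 ?mul1r.
  have [C [card_C C_bound]] := IHk (ltnW k_lt).
  have C0 : C != set0 by rewrite -card_gt0 card_C.
  have CT : C != setT by apply: contraTneq k_lt => CT; rewrite -card_C CT cardsT ltnn.
  have /subsetPn[t0 _ t0NC] : ~~ (setT \subset C) by rewrite subTset.
  have [t tNC t_max] := arg_maxP r (t0NC : [pred y | y \notin C] t0).
  have rhok_gt0 : 0 < rho ^+ k := exprn_gt0 _ rho_gt0.
  exists (t |: C); split=> [|z /setU1P[->|zC]].
  - by rewrite cardsU1 (negbTE tNC) card_C.
  - have := ratio_cut (a := r x0 / rho ^+ k) (b := r t) C0 CT _ (r_ge0 t).
    rewrite ler_pdivrMr // mulrAC -exprS; apply=> [|w wC|u].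
    + by rewrite divr_ge0 ?r_ge0 ?ltW.
    + by rewrite ler_pdivrMr // mulrC C_bound.
    + by rewrite in_setC; exact: t_max.
  - apply: le_trans (C_bound z zC) _.
    by rewrite exprSr mulrAC ler_peMr // mulr_ge0 ?r_ge0 ?exprn_ge0 ?ltW.
have /(_ _)[|C [card_C C_bound]] := grow #|S|.-1.
  by rewrite ltn_predL; apply/card_gt0P; exists x.
have CT : C = setT by apply/eqP; rewrite eqEcard subsetT cardsT card_C leqSpred.
by apply: le_trans (r_max x isT) _; apply: C_bound; rewrite CT inE.
Qed.

End RatioSpread.

Lemma ratio_near_one (R : realFieldType) (S : finType) (mu r : S -> R) (K : R) s :
    (forall x, 0 <= mu x) -> \sum_x mu x = 1 -> \sum_x mu x * r x = 1 ->
    (forall x y, r x <= K * r y) ->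
  `|1 - r s| <= K - 1.
Proof.
move=> mu_ge0 mu_sum mur_sum r_spread.
have [xM _ r_le] := arg_maxP r (isT : predT s).
have [xm _ r_ge] := arg_minP r (isT : predT s).
have rM_ge1 : 1 <= r xM.
  have : \sum_x mu x * r x <= \sum_x mu x * r xM.
    by apply: ler_sum => x _; rewrite ler_wpM2l //; exact: r_le.
  by rewrite -mulr_suml mu_sum mur_sum mul1r.
have rm_le1 : r xm <= 1.
  have : \sum_x mu x * r xm <= \sum_x mu x * r x.
    by apply: ler_sum => x _; rewrite ler_wpM2l //; exact: r_ge.
  by rewrite -mulr_suml mu_sum mur_sum mul1r.
have K_ge1 : 1 <= K.
  by have := r_spread xM xM; rewrite -[X in X <= _]mul1r ler_pM2r //; lra.
have rs_le : r s <= K by have := r_spread s xm; nra.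
have rs_ge : 2 - K <= r s.
  have := r_spread xM s; have := sqr_ge0 (K - 1).
  rewrite -(ler_pM2l (lt_le_trans ltr01 K_ge1) (2 - K)); nra.
by rewrite ler_norml; apply/andP; split; lra.
Qed.

Lemma expr1D_le (R : realFieldType) (x : R) k :
  0 <= x <= 1 -> (1 + x) ^+ k <= 1 + x * (k * 2 ^ k)%:R.
Proof.
case/andP=> x_ge0 x_le1; elim: k => [|k IHk]; first by rewrite expr0 mul0n mulr0 addr0.
have step : 1 + 2 * (k * 2 ^ k)%:R <= (k.+1 * 2 ^ k.+1)%:R :> R.
  rewrite -[2]/(2%:R : R) -natrM -[1]/(1%:R : R) -natrD ler_nat expnS.
  by have := expn_gt0 2 k; lia.
rewrite exprS.
have := ler_wpM2l (addr_ge0 ler01 x_ge0) IHk.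
have := ler_wpM2l x_ge0 step.
have : x * x * (k * 2 ^ k)%:R <= x * (k * 2 ^ k)%:R.
  by rewrite ler_wpM2r // ler_piMr.
nra.
Qed.

Lemma Lconst_ge (S : finType) : (1 < #|S|)%N ->
  (#|S|.-1 * 2 ^ #|S|.-1 <= Lconst S)%N.
Proof.
rewrite /Lconst; case: #|S| => [|[|m]] // _.
rewrite big_nat_recr //= binSn; apply: leq_trans (leq_addl _ _).
have pow2_le : (2 ^ m.+1 <= 2 * m.+1 ^ m.+1)%N.
  case: m => [|m] //; have : (2 ^ m.+2 <= m.+2 ^ m.+2)%N by rewrite leq_exp2r.
  lia.
rewrite [(m.+1 ^ m.+2)%N]expnSr; move: pow2_le; move: (2 ^ m.+1)%N (m.+1 ^ m.+1)%N.
nia.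
Qed.

Lemma beta_le_quarter (R : realFieldType) (n : nat) (beta : R) :
  (1 < n)%N -> 0 <= beta -> beta < 1 / 2 ^+ n -> 4 * beta <= 1.
Proof.
move=> n_gt1 beta_ge0.
have pow_ge4 : 4 <= 2 ^+ n :> R.
  by rewrite -natrX (ler_nat R 4) (leq_pexp2l (isT : 0 < 2)%N n_gt1).
rewrite ltr_pdivlMr ?exprn_gt0 //; nra.
Qed.

Lemma Lconst_ge1 (R : realFieldType) (S : finType) :
  (1 < #|S|)%N -> 1 <= (Lconst S)%:R :> R.
Proof.
move=> S_gt1; rewrite ler1n; apply: leq_trans (Lconst_ge S_gt1).
by rewrite muln_gt0 expn_gt0 andbT -subn1 subn_gt0.
Qed.

Lemma del_le_quarter (R : realFieldType) (S : finType) (beta eps : R) :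
    (1 < #|S|)%N -> 0 <= beta -> 0 <= eps ->
    eps < beta * (1 - beta) / ((Lconst S)%:R * #|S|%:R ^+ 4) ->
  4 * (#|S|%:R ^+ 2 * eps) <= beta.
Proof.
move=> S_gt1 beta_ge0 eps_ge0.
have N_ge2 : 2 <= #|S|%:R :> R by rewrite (ler_nat R 2).
have L_ge1 : 1 <= (Lconst S)%:R :> R := Lconst_ge1 R S_gt1.
have D_gt0 : 0 < (Lconst S)%:R * #|S|%:R ^+ 4 :> R.
  by rewrite mulr_gt0 ?exprn_gt0 //; lra.
rewrite ltr_pdivlMr // -[_ ^+ 4]/(_ ^+ (2 + 2)) exprD.
set L := (Lconst S)%:R; set n2 := _ ^+ 2 => eps_lt.
have n2_ge4 : 4 <= n2 by rewrite /n2 expr2; nra.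
have n2eps_ge0 : 0 <= n2 * eps by rewrite mulr_ge0 //; lra.
have : 4 * (n2 * eps) <= n2 * (n2 * eps) by rewrite ler_wpM2r.
have : n2 * (n2 * eps) <= L * (n2 * (n2 * eps)).
  by rewrite ler_peMl // mulr_ge0 //; lra.
nra.
Qed.

Lemma rho_pow_bound (R : realFieldType) (S : finType) (beta : R) :
    (1 < #|S|)%N -> 0 <= beta -> 4 * beta <= 1 ->
  (1 + 4 * beta) ^+ #|S|.-1 - 1 <= 18 * beta * (Lconst S)%:R.
Proof.
move=> S_gt1 beta_ge0 beta_le.
have : (1 + 4 * beta) ^+ #|S|.-1 <= 1 + 4 * beta * (#|S|.-1 * 2 ^ #|S|.-1)%:R.
  by apply: expr1D_le; apply/andP; split; lra.
have L_ge : (#|S|.-1 * 2 ^ #|S|.-1)%:R <= (Lconst S)%:R :> R.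
  by rewrite ler_nat Lconst_ge.
have beta4_ge0 : 0 <= 4 * beta by lra.
have := ler_wpM2l beta4_ge0 L_ge; have := Lconst_ge1 R S_gt1.
nra.
Qed.

Lemma cut_factor_le (R : realFieldType) (beta del : R) :
    0 <= beta -> 4 * beta <= 1 -> 0 <= del -> 4 * del <= beta ->
  1 + beta + del <= (1 + 4 * beta) * ((1 - beta) * (1 - del)).
Proof.
move=> beta_ge0 beta_le del_ge0 del_le.
have : 1 + 2 * beta <= (1 + 4 * beta) * (1 - beta) by nra.
have del1_ge0 : 0 <= 1 - del by lra.
by move/(ler_wpM2r del1_ge0); nra.
Qed.

Theorem theorem1 (R : realFieldType) (S : finType) (hS : (1 < #|S|)%N)
  (beta eps : R)
  (hbeta0 : 0 < beta) (hbeta1 : beta < 1 / 2 ^+ #|S|)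
  (heps0 : 0 < eps)
  (heps1 : eps < beta * (1 - beta) / ((Lconst S)%:R * (#|S|%:R) ^+ 4))
  (q : S -> S -> R) (mu : S -> R)
  (hq : transition q) (hirr : irreducible q) (hmu : stationary q mu)
  (qh : S -> S -> R) (hqh : transition qh)
  (hclose : close eps beta q mu qh) :
  irreducible qh /\
  (forall muh : S -> R, stationary qh muh ->
     forall s : S, `|1 - muh s / mu s| <= 18 * beta * (Lconst S)%:R).
Proof.
have [beta_ge0 eps_ge0] := (ltW hbeta0, ltW heps0).
have beta_le := beta_le_quarter hS beta_ge0 hbeta1.
have del_le := del_le_quarter hS beta_ge0 eps_ge0 heps1.
have del_ge0 : 0 <= #|S|%:R ^+ 2 * eps by rewrite mulr_ge0 ?exprn_ge0.
have beta_le1 : beta <= 1 by lra.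
split; first by apply: (perturbed_irreducible hq hirr hmu hqh hclose); lra.
move=> muh muh_st s.
have [mu_ge0 [mu_sum _]] := hmu; have mu_gt0 := stationary_gt0 hq hirr hmu.
have r_ge0 x : 0 <= muh x / mu x by rewrite divr_ge0 ?muh_st.1 ?ltW.
have c_gt0 : 0 < (1 - beta) * (1 - #|S|%:R ^+ 2 * eps) by rewrite mulr_gt0 //; lra.
have d_le := cut_factor_le beta_ge0 beta_le del_ge0 del_le.
have rho_ge1 : 1 <= 1 + 4 * beta by lra.
have spread := ratio_spread rho_ge1 r_ge0 (fun C a b =>
  perturbed_ratio_cut hq hirr hmu hqh hclose beta_ge0 beta_le1 eps_ge0 muh_st c_gt0 d_le).
apply: le_trans (rho_pow_bound hS beta_ge0 beta_le).
apply: ratio_near_one mu_ge0 mu_sum _ spread.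
under eq_bigr do rewrite mulrC divfK ?lt0r_neq0 //.
by case: muh_st => _ [].
Qed.
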